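(* Let $N>1$, $d\ge1$, $m\ge1$, and let $f:\mathbb{R}^{N\times d}\times\mathbb{R}^{N\times 3}\to\mathbb{R}^m$ be $\mathrm{O}(3)$-invariant ($f(s,\vec r o^T)=f(s,\vec r)$ for all $o\in\mathrm{O}(3)$), translation-invariant ($f(s,\vec r+\mathbf 1t)=f(s,\vec r)$ for all $t\in\mathbb{R}^{1\times 3}$) and permutation-invariant ($f(\pi(s),\pi(\vec r))=f(s,\vec r)$ for all $\pi\in S_N$). Let $g$ be as in the context and, for a molecule $(s,\vec r)$, let $z_1(s,\vec r)=\rho\big(\sum_{j=1}^N\varphi(\mathrm{Concatenate}(\vec r_{1j}\vec E_1^T,\tilde s_j))\big)$ with $\vec E_1=g(\mathrm{LE}_1)$. Then there exist functions $\varphi,\rho$ and $h$ (with $h$ taking values in $\mathbb{R}^m$) such that the map $(s,\vec r)\mapsto\frac{1}{N!}\sum_{\pi\in S_N}h\big(z_1(\pi(s),\pi(\vec r))\big)$ is permutation-invariant and equals $f(s,\vec r)$ for all $(s,\vec r)$.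
   Context: For a molecule with features $s\in\mathbb{R}^{N\times d}$ (row $s_j$) and coordinates $\vec r\in\mathbb{R}^{N\times 3}$ (row $\vec r_j$), set $\vec r_{ij}=\vec r_i-\vec r_j$, node identity features $\tilde s_j=\mathrm{Concatenate}(s_j,j)\in\mathbb{R}^{d+1}$ and $\mathrm{LE}_i=\{(\tilde s_j,\vec r_{ij}): j=1,\dots,N\}$. $\mathbf 1\in\mathbb{R}^{N\times1}$ is the all-ones column. $S_N$ is the group of permutations of $\{1,\dots,N\}$; for a matrix $M$ with $N$ rows and $\pi\in S_N$, $\pi(M)$ is the matrix whose $i$-th row is the $\pi^{-1}(i)$-th row of $M$. $\mathrm{O}(3)=\{Q\in\mathbb{R}^{3\times3}:QQ^T=I\}$. The function $g$ maps such local environments to $\mathbb{R}^{3\times3}$, satisfies $g(\{(\tilde s_j,\vec r_{ij}o^T)\}_j)=g(\{(\tilde s_j,\vec r_{ij})\}_j)o^T$ for all $o\in\mathrm{O}(3)$, and for every molecule and $i$ the matrix $\vec E_i=g(\mathrm{LE}_i)$, with $k=\mathrm{rank}(\vec E_i)$, has its first $k$ rows forming an orthonormal basis of $\mathrm{span}\{\vec r_{ij}:j\}$ and its remaining rows zero. *)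

From HB Require Import structures.
From mathcomp Require Import all_boot all_order all_algebra all_fingroup.
From mathcomp Require Import reals.
Set Implicit Arguments. Unset Strict Implicit. Unset Printing Implicit Defensive.
Import Order.TTheory GRing.Theory Num.Theory.
Local Open Scope ring_scope.

Section Defs.
Variables (R : realType) (N d : nat).

Definition orth3 (o : 'M[R]_3) : Prop := o *m o^T = 1%:M.

Definition perm_rows (n : nat) (p : 'S_N) (M : 'M[R]_(N, n)) : 'M[R]_(N, n) :=
  \matrix_(i, c) M (p^-1 i)%g c.

Definition transl (t : 'rV[R]_3) : 'M[R]_(N, 3) := const_mx 1 *m t.

Definition stilde (s : 'M[R]_(N, d)) : 'M[R]_(N, d + 1) :=
  row_mx s (\col_(j < N) (j.+1)%:R).

Definition relmx (r : 'M[R]_(N, 3)) (i : 'I_N) : 'M[R]_(N, 3) :=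
  \matrix_(j, c) (r i c - r j c).

(* local environment LE_i, encoded as the pair of matrices whose j-th rows
   are s~_j and r_ij (the index j is part of s~_j, so the set
   {(s~_j, r_ij)} and this pair determine each other). *)
Definition LE (s : 'M[R]_(N, d)) (r : 'M[R]_(N, 3)) (i : 'I_N) :=
  (stilde s, relmx r i).

Definition gapp (g : 'M[R]_(N, d + 1) -> 'M[R]_(N, 3) -> 'M[R]_3)
  (e : 'M[R]_(N, d + 1) * 'M[R]_(N, 3)) : 'M[R]_3 := g e.1 e.2.

Definition g_equivariant (g : 'M[R]_(N, d + 1) -> 'M[R]_(N, 3) -> 'M[R]_3) :=
  forall (s : 'M[R]_(N, d)) (r : 'M[R]_(N, 3)) (i : 'I_N) (o : 'M[R]_3),
    orth3 o -> g (stilde s) (relmx r i *m o^T) = gapp g (LE s r i) *m o^T.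

Definition g_frame (g : 'M[R]_(N, d + 1) -> 'M[R]_(N, 3) -> 'M[R]_3) :=
  forall (s : 'M[R]_(N, d)) (r : 'M[R]_(N, 3)) (i : 'I_N),
    let E := gapp g (LE s r i) in
    let k := \rank E in
    [/\
        (forall a b : 'I_3, (a < k)%N -> (b < k)%N ->
            row a E *m (row b E)^T = (a == b)%:R%:M),
        (E == relmx r i)%MS &
        (forall a : 'I_3, (k <= a)%N -> row a E = 0)].

Definition z1 (K L : nat) (i1 : 'I_N)
  (g : 'M[R]_(N, d + 1) -> 'M[R]_(N, 3) -> 'M[R]_3)
  (phi : 'rV[R]_(3 + (d + 1)) -> 'rV[R]_K) (rho : 'rV[R]_K -> 'rV[R]_L)
  (s : 'M[R]_(N, d)) (r : 'M[R]_(N, 3)) : 'rV[R]_L :=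
  let E1 := gapp g (LE s r i1) in
  rho (\sum_(j < N) phi (row_mx (row j (relmx r i1) *m E1^T) (row j (stilde s)))).

End Defs.

(* [phi] writes each atom's row (frame coordinates of r_1j, s~_j) into the
   block selected by the identity feature j, so the sum over j is the whole
   matrix [r_1. E_1^T | s~] and loses nothing; [h] reads s and r_1. E_1^T
   back off it and applies f.  Since the nonzero rows of E_1 are an
   orthonormal basis of the span of the r_1j, they extend to an orthogonal o
   with r_1. E_1^T = r_1. o^T, so h (z_1 (s, r)) = f (s, (r_1 - r) o^T) =
   f (s, r) by O(3)- and translation invariance.  Every summand of the
   average is therefore f (pi s, pi r) = f (s, r). *)
From HB Require Import structures.
From mathcomp Require Import all_boot all_order all_algebra all_fingroup.
From mathcomp Require Import reals ring lra.
Set Implicit Arguments. Unset Strict Implicit. Unset Printing Implicit Defensive.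
Import Order.TTheory GRing.Theory Num.Theory.
Local Open Scope ring_scope.

Section RowDot.
Variable R : comPzRingType.

Definition dot n (u v : 'rV[R]_n) : R := \sum_k u 0 k * v 0 k.

Lemma mulmx_trE m p n (A : 'M[R]_(m, n)) (B : 'M[R]_(p, n)) a b :
  (A *m B^T) a b = dot (row a A) (row b B).
Proof. by rewrite !mxE; apply: eq_bigr => k _; rewrite !mxE. Qed.

Lemma dot_mulmx n (u v : 'rV[R]_n) : dot u v = (u *m v^T) 0 0.
Proof. by rewrite mulmx_trE !row_id. Qed.

Lemma dotC n (u v : 'rV[R]_n) : dot u v = dot v u.
Proof. by apply: eq_bigr => k _; rewrite mulrC. Qed.

Lemma dot0r n (u : 'rV[R]_n) : dot u 0 = 0.
Proof. by rewrite /dot big1 // => k _; rewrite mxE mulr0. Qed.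

Lemma dot0l n (u : 'rV[R]_n) : dot 0 u = 0.
Proof. by rewrite dotC dot0r. Qed.

Lemma dotZr n c (u v : 'rV[R]_n) : dot u (c *: v) = c * dot u v.
Proof. by rewrite /dot mulr_sumr; apply: eq_bigr => k _; rewrite mxE mulrCA. Qed.

Lemma orthonormal_rowsP n (o : 'M[R]_n) :
  o *m o^T = 1%:M <-> forall a b, dot (row a o) (row b o) = (a == b)%:R.
Proof.
split=> [Ho a b | Ho]; first by rewrite -mulmx_trE Ho mxE.
by apply/matrixP => a b; rewrite mulmx_trE Ho mxE.
Qed.

End RowDot.

Section Space3.
Variable R : rcfType.
Implicit Types u v w : 'rV[R]_3.

Local Notation c0 := (@Ordinal 3 0 isT).
Local Notation c1 := (@Ordinal 3 1 isT).
Local Notation c2 := (@Ordinal 3 2 isT).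

Lemma dot3E u v : dot u v = u 0 c0 * v 0 c0 + u 0 c1 * v 0 c1 + u 0 c2 * v 0 c2.
Proof.
rewrite /dot !big_ord_recr big_ord0 /= add0r.
by congr (_ * _ + _ * _ + _ * _); congr (_ _ _); apply: val_inj.
Qed.

Definition vec3 (x y z : R) : 'rV[R]_3 := \row_i [:: x; y; z]`_i.

Lemma vec3E x y z i : vec3 x y z 0 i = [:: x; y; z]`_i.
Proof. by rewrite mxE. Qed.

Definition cross u v := vec3 (u 0 c1 * v 0 c2 - u 0 c2 * v 0 c1)
  (u 0 c2 * v 0 c0 - u 0 c0 * v 0 c2) (u 0 c0 * v 0 c1 - u 0 c1 * v 0 c0).

Lemma dot_cross_l u v : dot u (cross u v) = 0.
Proof. by rewrite dot3E /cross !vec3E /=; ring. Qed.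

Lemma dot_cross_r u v : dot v (cross u v) = 0.
Proof. by rewrite dot3E /cross !vec3E /=; ring. Qed.

Lemma dot_cross_cross u v :
  dot (cross u v) (cross u v) = dot u u * dot v v - dot u v ^+ 2.
Proof. by rewrite !dot3E /cross !vec3E /=; ring. Qed.

Definition mk3 u v w : 'M[R]_3 := \matrix_(i, j) ([:: u; v; w]`_i) 0 j.

Lemma row_mk3 u v w (a : 'I_3) : row a (mk3 u v w) = [:: u; v; w]`_a.
Proof. by apply/rowP => j; rewrite !mxE. Qed.

Lemma orthonormal_mk3_cross u v : dot u u = 1 -> dot v v = 1 -> dot u v = 0 ->
  mk3 u v (cross u v) *m (mk3 u v (cross u v))^T = 1%:M.
Proof.
move=> Hu Hv Huv; apply/orthonormal_rowsP => a b; rewrite !row_mk3.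
have Hc : dot (cross u v) (cross u v) = 1.
  by rewrite dot_cross_cross Hu Hv Huv expr0n /= mul1r subr0.
case: a => [[|[|[|a]]] Ha]; case: b => [[|[|[|b]]] Hb] //=;
  by rewrite ?Hu ?Hv ?Hc ?dot_cross_l ?dot_cross_r // dotC
             ?Huv ?dot_cross_l ?dot_cross_r.
Qed.

Lemma exists_unit_orthogonal u : exists w, dot w w = 1 /\ dot u w = 0.
Proof.
have [/eqP yz0 | yz_neq0] := eqVneq (u 0 c1 ^+ 2 + u 0 c2 ^+ 2) 0.
  have [y0 z0] : u 0 c1 = 0 /\ u 0 c2 = 0 by split; nra.
  by exists (vec3 0 1 0); rewrite !dot3E !vec3E /= y0; split; ring.
pose w := vec3 0 (- u 0 c2) (u 0 c1).
have w2 : dot w w = u 0 c1 ^+ 2 + u 0 c2 ^+ 2.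
  by rewrite dot3E !vec3E /=; ring.
have uw : dot u w = 0 by rewrite dot3E !vec3E /=; ring.
have w2_gt0 : 0 < dot w w by rewrite w2 lt_def yz_neq0 /=; nra.
exists ((Num.sqrt (dot w w))^-1 *: w); split.
  by rewrite dotZr dotC dotZr mulrA -expr2 exprVn sqr_sqrtr ?mulVf ?ltW ?gt_eqF.
by rewrite dotZr uw mulr0.
Qed.

Lemma orthonormal_completion3 (E : 'M[R]_3) (k : nat) : (k <= 3)%N ->
  (forall a b : 'I_3, (a < k)%N -> (b < k)%N ->
     dot (row a E) (row b E) = (a == b)%:R) ->
  exists2 o : 'M[R]_3, o *m o^T = 1%:M & forall a : 'I_3, (a < k)%N -> row a o = row a E.
Proof.
case: k => [|[|[|[|//]]]] _ HE.
- by exists 1%:M => //; rewrite trmx1 mul1mx.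
- have [w [Hw Hew]] := exists_unit_orthogonal (row c0 E).
  exists (mk3 (row c0 E) w (cross (row c0 E) w)).
    by apply: orthonormal_mk3_cross; rewrite ?HE.
  by case=> [[|//] Ha] _; rewrite row_mk3 /=; congr row; apply: val_inj.
- exists (mk3 (row c0 E) (row c1 E) (cross (row c0 E) (row c1 E))).
    by apply: orthonormal_mk3_cross; rewrite HE.
  by case=> [[|[|//]] Ha] _; rewrite row_mk3 /=; congr row; apply: val_inj.
- by exists E => //; apply/orthonormal_rowsP => a b; apply: HE.
Qed.

Lemma frame_orthogonal_completion (E : 'M[R]_3) (k : nat) : (k <= 3)%N ->
  (forall a b : 'I_3, (a < k)%N -> (b < k)%N ->
     row a E *m (row b E)^T = (a == b)%:R%:M) ->
  (forall a : 'I_3, (k <= a)%N -> row a E = 0) ->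
  exists2 o : 'M[R]_3, o *m o^T = 1%:M &
    forall n (A : 'M[R]_(n, 3)), (A <= E)%MS -> A *m E^T = A *m o^T.
Proof.
move=> k_le3 E_orth E_zero.
have E_dot (a b : 'I_3) : (a < k)%N -> (b < k)%N -> dot (row a E) (row b E) = (a == b)%:R.
  by move=> ak bk; rewrite dot_mulmx E_orth // mxE eqxx mulr1n.
have [o o_orth oE] := orthonormal_completion3 k_le3 E_dot.
have o_dot := proj1 (orthonormal_rowsP o) o_orth.
have EoT : E *m o^T = E *m E^T.
  apply/matrixP => a b; rewrite !mulmx_trE.
  have [ak | ka] := ltnP a k; last by rewrite E_zero // !dot0l.
  rewrite -oE // o_dot; have [bk | kb] := ltnP b k; first by rewrite -oE // o_dot.
  rewrite E_zero // dot0r.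
  by case: eqP ak => // ->; rewrite ltnNge kb.
exists o => // n A /submxP [D ->].
by rewrite -!mulmxA EoT.
Qed.

End Space3.

Section Invariance.
Variables (R : realType) (N d m : nat).
Variable f : 'M[R]_(N, d) -> 'M[R]_(N, 3) -> 'rV[R]_m.
Hypothesis f_O3 : forall s r (o : 'M[R]_3), orth3 o -> f s (r *m o^T) = f s r.
Hypothesis f_transl : forall s r (t : 'rV[R]_3), f s (r + transl N t) = f s r.

Lemma orth3_opp1 : orth3 (- 1%:M : 'M[R]_3).
Proof. by rewrite /orth3 linearN /= trmx1 mulmxN mulNmx mul1mx opprK. Qed.

Lemma relmxE (r : 'M[R]_(N, 3)) i : relmx r i = r *m (- 1%:M)^T + transl N (row i r).
Proof.
rewrite linearN /= trmx1 mulmxN mulmx1.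
by apply/matrixP => j c; rewrite !mxE big_ord1 !mxE mul1r addrC.
Qed.

Lemma f_relmx s r i : f s (relmx r i) = f s r.
Proof. by rewrite relmxE f_transl (f_O3 _ _ orth3_opp1). Qed.

Lemma f_frame_coords s (A : 'M[R]_(N, 3)) (E : 'M[R]_3) (k : nat) : (k <= 3)%N ->
  (forall a b : 'I_3, (a < k)%N -> (b < k)%N ->
     row a E *m (row b E)^T = (a == b)%:R%:M) ->
  (forall a : 'I_3, (k <= a)%N -> row a E = 0) ->
  (A <= E)%MS -> f s (A *m E^T) = f s A.
Proof.
move=> k_le3 E_orth E_zero AE.
have [o o_orth oE] := frame_orthogonal_completion k_le3 E_orth E_zero.
by rewrite oE // (f_O3 _ _ o_orth).
Qed.

End Invariance.

Section IndexEncoding.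
Variables (R : realType) (N d n : nat).

Definition index_col : 'I_(n + (d + 1)) := rshift n (rshift d (ord0 : 'I_1)).

Definition scatter (x : 'rV[R]_(n + (d + 1))) : 'rV[R]_(N * (n + (d + 1))) :=
  mxvec (\matrix_(j < N, c < n + (d + 1))
    if x 0 index_col == j.+1%:R then x 0 c else 0).

Definition decode m (f : 'M[R]_(N, d) -> 'M[R]_(N, n) -> 'rV[R]_m)
  (z : 'rV[R]_(N * (n + (d + 1)))) : 'rV[R]_m :=
  let M : 'M[R]_(N, n + (d + 1)) := vec_mx z in f (lsubmx (rsubmx M)) (lsubmx M).

Lemma stilde_index (A : 'M[R]_(N, n)) (s : 'M[R]_(N, d)) j :
  row j (row_mx A (stilde s)) 0 index_col = j.+1%:R.
Proof. by rewrite mxE row_mxEr /stilde row_mxEr mxE. Qed.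

Lemma sum_scatter (A : 'M[R]_(N, n)) (s : 'M[R]_(N, d)) :
  \sum_(j < N) scatter (row j (row_mx A (stilde s))) = mxvec (row_mx A (stilde s)).
Proof.
rewrite -raddf_sum /=; congr mxvec; apply/matrixP => j c.
rewrite summxE (bigD1 j) //= big1 => [|j' j'j]; rewrite mxE stilde_index.
  by rewrite eqxx addr0 mxE.
by rewrite eqr_nat eqSS (inj_eq val_inj) (negPf j'j).
Qed.

Lemma decode_mxvec m (f : 'M[R]_(N, d) -> 'M[R]_(N, n) -> 'rV[R]_m) A s :
  decode f (mxvec (row_mx A (stilde s))) = f s A.
Proof. by rewrite /decode mxvecK row_mxKl row_mxKr /stilde row_mxKl. Qed.

End IndexEncoding.

Lemma z1_scatter (R : realType) (N d : nat) (i : 'I_N)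
    (g : 'M[R]_(N, d + 1) -> 'M[R]_(N, 3) -> 'M[R]_3) s r :
  z1 i g (@scatter R N d 3) id s r
  = mxvec (row_mx (relmx r i *m (gapp g (LE s r i))^T) (stilde s)).
Proof.
rewrite /z1 -sum_scatter; apply: eq_bigr => j _.
by rewrite row_row_mx row_mul.
Qed.

Lemma mean_const_perm (R : numFieldType) (V : lmodType R) n (v : V) :
  (n`!%:R)^-1 *: \sum_(p : 'S_n) v = v.
Proof.
rewrite sumr_const card_Sn -scaler_nat scalerA mulVf ?scale1r //.
by rewrite pnatr_eq0 -lt0n fact_gt0.
Qed.

Theorem proposition8 (R : realType) (N d m : nat)
  (hN : (1 < N)%N) (hd : (1 <= d)%N) (hm : (1 <= m)%N)
  (f : 'M[R]_(N, d) -> 'M[R]_(N, 3) -> 'rV[R]_m)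
  (f_O3 : forall s r (o : 'M[R]_3), orth3 o -> f s (r *m o^T) = f s r)
  (f_transl : forall s r (t : 'rV[R]_3), f s (r + transl N t) = f s r)
  (f_perm : forall s r (p : 'S_N), f (perm_rows p s) (perm_rows p r) = f s r)
  (g : 'M[R]_(N, d + 1) -> 'M[R]_(N, 3) -> 'M[R]_3)
  (g_eq : g_equivariant g) (g_fr : g_frame g) :
  let i1 : 'I_N := @Ordinal N 0 (ltnW hN) in
  exists (K L : nat) (phi : 'rV[R]_(3 + (d + 1)) -> 'rV[R]_K)
         (rho : 'rV[R]_K -> 'rV[R]_L) (h : 'rV[R]_L -> 'rV[R]_m),
    let F := fun (s : 'M[R]_(N, d)) (r : 'M[R]_(N, 3)) =>
      (N`!%:R)^-1 *: \sum_(p : 'S_N)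
         h (z1 i1 g phi rho (perm_rows p s) (perm_rows p r)) in
    (forall s r (p : 'S_N), F (perm_rows p s) (perm_rows p r) = F s r) /\
    (forall s r, F s r = f s r).
Proof.
move=> i1; exists (N * (3 + (d + 1)))%N, (N * (3 + (d + 1)))%N.
exists (@scatter R N d 3), id, (decode f) => F.
have h_z1 s r : decode f (z1 i1 g (@scatter R N d 3) id s r) = f s r.
  have [E_orth /andP[_ relmx_sub] E_zero] := g_fr s r i1.
  rewrite z1_scatter decode_mxvec.
  have -> := f_frame_coords f_O3 s (rank_leq_row _) E_orth E_zero relmx_sub.
  exact: (f_relmx f_O3 f_transl).
have FE s r : F s r = f s r.
  by rewrite /F (eq_bigr (fun=> f s r)) ?mean_const_perm // => p _; rewrite h_z1.
by split=> [s r p|s r]; rewrite !FE ?f_perm.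
Qed.
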